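(* Consider the two-layer multi-item order fulfillment problem described in the context with a single FDC ($K=1$), time-invariant variable costs, and given fixed costs $f_0\ge0$, $f_1>0$. Then every online fulfillment policy $\mathrm{ALG}$ (deterministic or randomized) satisfies \[\mathfrak R_{\mathrm{inv}}(\mathrm{ALG})\ge\max\left\{1+\frac{f_0}{f_1},\ \frac54\right\}.\]
   Context: Problem with one FDC (index $1$) and one RDC (index $0$, unlimited inventory). The FDC initially holds $I_{1,0}^i\ge0$ units of item $i$, never replenished. In periods $t=1,\dots,T$ an order $\boldsymbol S_t=(S_t^i)_i$ of nonnegative integers arrives; the policy must immediately and irrevocably choose $m_{0,t}^i,m_{1,t}^i\ge0$ with $m_{0,t}^i+m_{1,t}^i=S_t^i$ and $m_{1,t}^i\le I_{1,t-1}^i$, $I_{1,t}^i=I_{1,0}^i-\sum_{\tau\le t}m_{1,\tau}^i$. Period cost $\sum_{k=0,1}[f_k\mathbb{I}(\sum_im_{k,t}^i>0)+\sum_ic_k^im_{k,t}^i]$; total cost is the sum. An online policy (possibly randomized) decides in period $t$ using only fixed costs, initial inventories, the variable costs and orders up to $t$. $\mathfrak R_{\mathrm{inv}}(\mathrm{ALG})$ is the supremum of $\mathrm{ALG}(I)/\mathrm{OPT}(I)$ ((expected) policy cost over offline optimal cost) over all numbers of items, horizons, initial inventories, nonnegative time-invariant variable costs $c_{k,t}^i=c_k^i$ and order sequences. *)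

From mathcomp Require Import all_boot all_order all_algebra.
From mathcomp Require Import boolp classical_sets reals.
Set Implicit Arguments. Unset Strict Implicit. Unset Printing Implicit Defensive.
Import Order.TTheory GRing.Theory Num.Theory.
Local Open Scope ring_scope.
Local Open Scope classical_set_scope.

(* One FDC (index 1) and one RDC (index 0, unlimited inventory).  A decision in a
   period is the vector m1 : 'I_n -> nat of units shipped from the FDC; the
   RDC ships m0 i = Ot i - m1 i. *)

Section Model.
Variable R : realType.

Definition period_cost (f0 f1 : R) (n : nat) (c0 c1 : 'I_n -> R)
    (Ot m1 : 'I_n -> nat) : R :=
  f0 * (if [exists i, (0 < Ot i - m1 i)%N] then 1 else 0)
  + f1 * (if [exists i, (0 < m1 i)%N] then 1 else 0)
  + \sum_(i < n) (c0 i * ((Ot i - m1 i)%N)%:R + c1 i * (m1 i)%:R).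

Fixpoint plan_ok (n : nat) (inv : 'I_n -> nat) (os ms : seq ('I_n -> nat))
  : Prop :=
  match os, ms with
  | [::], [::] => True
  | Ot :: os', m :: ms' =>
      (forall i, (m i <= Ot i)%N /\ (m i <= inv i)%N)
      /\ plan_ok (fun i => inv i - m i)%N os' ms'
  | _, _ => False
  end.

Fixpoint plan_cost (f0 f1 : R) (n : nat) (c0 c1 : 'I_n -> R)
    (os ms : seq ('I_n -> nat)) : R :=
  match os, ms with
  | Ot :: os', m :: ms' => period_cost f0 f1 c0 c1 Ot m + plan_cost f0 f1 c0 c1 os' ms'
  | _, _ => 0
  end.

Definition OPT (f0 f1 : R) (n : nat) (I0 : 'I_n -> nat) (c0 c1 : 'I_n -> R)
    (os : seq ('I_n -> nat)) : R :=
  inf [set plan_cost f0 f1 c0 c1 os ms | ms in [set ms | plan_ok I0 os ms]].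

Definition history (n : nat) := seq (('I_n -> nat) * ('I_n -> nat)).

(* An online randomized policy (behavioral form): given the number of items,
   the initial inventories, the variable costs, the history of past orders and
   own past decisions, and the current order, it returns a finitely supported
   probability distribution over decisions, as a list of (probability,
   decision) pairs.  It does not see the horizon nor future orders.  The fixed
   costs f0 f1 are fixed throughout the theorem, so the policy may depend on
   them implicitly.  Deterministic policies are the special case of
   one-point distributions. *)
Definition policy :=
  forall n : nat, ('I_n -> nat) -> ('I_n -> R) -> ('I_n -> R) ->
    history n -> ('I_n -> nat) -> seq (R * ('I_n -> nat)).

Definition remaining (n : nat) (I0 : 'I_n -> nat) (h : history n) (i : 'I_n)
  : nat := (I0 i - \sum_(p <- h) p.2 i)%N.

Definition valid_policy (pol : policy) : Prop :=
  forall n I0 c0 c1 (h : history n) (Ot : 'I_n -> nat),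
    (forall pa, pa \in pol n I0 c0 c1 h Ot -> 0 <= pa.1) /\
    \sum_(pa <- pol n I0 c0 c1 h Ot) pa.1 = 1 /\
    (forall pa, pa \in pol n I0 c0 c1 h Ot ->
       forall i, (pa.2 i <= Ot i)%N /\ (pa.2 i <= remaining I0 h i)%N).

Fixpoint exp_cost (f0 f1 : R) (pol : policy) (n : nat) (I0 : 'I_n -> nat)
    (c0 c1 : 'I_n -> R) (h : history n) (os : seq ('I_n -> nat)) : R :=
  match os with
  | [::] => 0
  | Ot :: os' =>
      \sum_(pa <- pol n I0 c0 c1 h Ot)
        pa.1 * (period_cost f0 f1 c0 c1 Ot pa.2
                + exp_cost f0 f1 pol I0 c0 c1 (rcons h (Ot, pa.2)) os')
  end.

Definition ALG (f0 f1 : R) (pol : policy) (n : nat) (I0 : 'I_n -> nat)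
    (c0 c1 : 'I_n -> R) (os : seq ('I_n -> nat)) : R :=
  exp_cost f0 f1 pol I0 c0 c1 [::] os.

(* This is "sup_I ALG(I)/OPT(I) >= B"
   with the convention ALG/OPT = +oo when OPT = 0 < ALG. *)
Definition ratio_at_least (f0 f1 : R) (pol : policy) (B : R) : Prop :=
  forall r : R, r < B ->
    exists (n : nat) (I0 : 'I_n -> nat) (c0 c1 : 'I_n -> R)
           (os : seq ('I_n -> nat)),
      (forall i, 0 <= c0 i) /\ (forall i, 0 <= c1 i) /\
      r * OPT f0 f1 I0 c0 c1 os < ALG f0 f1 pol I0 c0 c1 os.

End Model.

(* Both bounds come from instances built on a hub item, stocked at the FDC and
   priced f1 at the RDC, and N spoke items priced a at the RDC.

   For 1 + f0/f1, the first order asks for one hub unit and for the whole FDC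
   stock q of every spoke.  If the policy ships m_j units of spoke j from the
   FDC, the adversary can continue with q orders {hub, spoke j}, and m_j of
   them find no stock of spoke j and pay f0 + a on top of f1.  Since the first
   period costs a per spoke unit shipped from the RDC and N a >= f0 + a,
   averaging over j gives some j with ALG >= f1 + q (f1 + f0 + a), while
   shipping spoke j from the RDC at once costs at most f0 + f1 + a q + q f1.
   Letting q grow and a shrink yields 1 + f0/f1.

   For 5/4 (when f0 <= 2 f1, with a = 2 f1 - f0), one spoke unit is ordered and
   P is the probability that the policy ships it from the FDC.  Stopping there
   gives ALG >= (2 - P) f1 against OPT <= f1; following with {hub, spoke} gives
   ALG >= (3 + P) f1 against OPT <= 3 f1, and max (2 - P, 1 + P/3) >= 5/4. *)

From mathcomp Require Import all_boot all_order all_algebra.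
From mathcomp Require Import boolp classical_sets reals.
From mathcomp Require Import lra zify.
Import Order.TTheory GRing.Theory Num.Theory.
Local Open Scope ring_scope.

Section Expectation.
Context {R : numDomainType} {T : eqType}.

Definition is_distr (s : seq (R * T)) :=
  (forall pa, pa \in s -> 0 <= pa.1) /\ \sum_(pa <- s) pa.1 = 1.

Context {s : seq (R * T)} (s_distr : is_distr s).

Lemma expect_le (F G : R * T -> R) :
  (forall pa, pa \in s -> F pa <= G pa) ->
  \sum_(pa <- s) pa.1 * F pa <= \sum_(pa <- s) pa.1 * G pa.
Proof.
move=> FG; rewrite big_seq [leRHS]big_seq; apply: ler_sum => pa spa.
by apply: ler_wpM2l; [apply: s_distr.1 | apply: FG].
Qed.

Lemma expect_affine (u v : R) (g : R * T -> R) :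
  \sum_(pa <- s) pa.1 * (u + v * g pa) = u + v * \sum_(pa <- s) pa.1 * g pa.
Proof.
under eq_bigr => pa _ do rewrite mulrDr mulrCA.
by rewrite big_split /= -mulr_suml -mulr_sumr s_distr.2 mul1r.
Qed.

Lemma expect_ge (c : R) (F : R * T -> R) :
  (forall pa, pa \in s -> c <= F pa) -> c <= \sum_(pa <- s) pa.1 * F pa.
Proof.
move=> cF; have := expect_affine c 0 F; rewrite mul0r addr0 => <-.
by apply: expect_le => pa spa; rewrite mul0r addr0; apply: cF.
Qed.

End Expectation.

Lemma remaining_nil n (I0 : 'I_n -> nat) : remaining I0 [::] = I0.
Proof. by apply: funext => i; rewrite /remaining big_nil subn0. Qed.

Lemma remaining_rcons n (I0 : 'I_n -> nat) (h : history n) O m :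
  remaining I0 (rcons h (O, m)) = (fun i => remaining I0 h i - m i)%N.
Proof.
by apply: funext => i; rewrite /remaining -cats1 big_cat big_seq1 subnDA.
Qed.

Section Policies.
Context {R : realType} {pol : policy R} (pol_valid : valid_policy pol).

Lemma policy_distr n I0 c0 c1 (h : history n) O :
  is_distr (pol n I0 c0 c1 h O).
Proof. by have [? [? _]] := pol_valid n I0 c0 c1 h O. Qed.

Lemma policy_feasible n I0 c0 c1 (h : history n) O pa :
  pa \in pol n I0 c0 c1 h O ->
  forall i, (pa.2 i <= O i)%N /\ (pa.2 i <= remaining I0 h i)%N.
Proof. by have [_ [_]] := pol_valid n I0 c0 c1 h O; apply. Qed.

Lemma exp_cost_nseq_ge (f0 f1 : R) {n} (I0 : 'I_n -> nat) c0 c1 O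
    (G : ('I_n -> nat) -> nat -> R) k h :
  (forall inv, G inv 0 <= 0) ->
  (forall inv k m, (forall i, m i <= O i /\ m i <= inv i)%N ->
     G inv k.+1 <= period_cost f0 f1 c0 c1 O m + G (fun i => inv i - m i)%N k) ->
  G (remaining I0 h) k <= exp_cost f0 f1 pol I0 c0 c1 h (nseq k O).
Proof.
move=> G0 GS; elim: k h => [|k IHk] h /=; first exact: G0.
apply: (expect_ge (policy_distr _ _ _ _ _ _)) => pa /policy_feasible m_ok.
by apply: le_trans (GS _ _ _ m_ok) _; rewrite lerD2l -(remaining_rcons _ _ h O).
Qed.

End Policies.

Section CostLowerBounds.
Context {R : realType} {f0 f1 : R} {n : nat} {c0 c1 : 'I_n -> R}.
Hypotheses (f0_ge0 : 0 <= f0) (f1_ge0 : 0 <= f1)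
  (c0_ge0 : forall i, 0 <= c0 i) (c1_ge0 : forall i, 0 <= c1 i).

Lemma period_cost_ge0 O m : 0 <= period_cost f0 f1 c0 c1 O m.
Proof.
rewrite /period_cost !addr_ge0 ?mulr_ge0 //; try by case: ifP.
by apply: sumr_ge0 => i _; rewrite addr_ge0 ?mulr_ge0.
Qed.

Lemma plan_cost_ge0 os ms : 0 <= plan_cost f0 f1 c0 c1 os ms.
Proof.
elim: os ms => [|O os IHos] [|m ms] //=.
by rewrite addr_ge0 ?period_cost_ge0.
Qed.

Lemma OPT_ge0 I0 os : 0 <= OPT f0 f1 I0 c0 c1 os.
Proof.
rewrite /OPT; set E := (X in inf X).
have [->|E_ne0] := eqVneq E set0; first by rewrite inf0.
apply: lb_le_inf; first exact/set0P.
by move=> _ [ms _ <-]; apply: plan_cost_ge0.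
Qed.

Lemma OPT_le_plan_cost I0 os ms :
  plan_ok I0 os ms -> OPT f0 f1 I0 c0 c1 os <= plan_cost f0 f1 c0 c1 os ms.
Proof.
move=> ms_ok; apply: ge_inf; last by exists ms.
by exists 0 => _ [ms' _ <-]; apply: plan_cost_ge0.
Qed.

Lemma period_cost_ge_fdc O m i : (0 < m i)%N -> f1 <= period_cost f0 f1 c0 c1 O m.
Proof.
move=> m_gt0; rewrite /period_cost.
have -> : [exists i, (0 < m i)%N] by apply/existsP; exists i.
rewrite mulr1 -addrA (addrC f1) addrA lerDr addr_ge0 ?mulr_ge0 //; first by case: ifP.
by apply: sumr_ge0 => k _; rewrite addr_ge0 ?mulr_ge0.
Qed.

Lemma period_cost_ge_rdc O m i :
  (m i < O i)%N -> f0 + c0 i * (O i - m i)%:R <= period_cost f0 f1 c0 c1 O m.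
Proof.
move=> m_lt; rewrite /period_cost.
have -> : [exists i, (0 < O i - m i)%N] by apply/existsP; exists i; rewrite subn_gt0.
rewrite mulr1 -addrA lerD2l -[leLHS]add0r lerD ?mulr_ge0 //; first by case: ifP.
rewrite (bigD1 i) //= -addrA -[leLHS]addr0 lerD ?addr_ge0 ?mulr_ge0 //.
by apply: sumr_ge0 => k _; rewrite addr_ge0 ?mulr_ge0.
Qed.

End CostLowerBounds.

Section CostUpperBounds.
Context {R : realType} {f0 f1 : R} {n : nat} {c0 c1 : 'I_n -> R}.
Hypotheses (f0_ge0 : 0 <= f0) (f1_ge0 : 0 <= f1).

Lemma period_cost_le O m : period_cost f0 f1 c0 c1 O m <=
  f0 + f1 + \sum_(i < n) (c0 i * (O i - m i)%:R + c1 i * (m i)%:R).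
Proof. by rewrite /period_cost lerD2r lerD ?ler_piMr //; case: ifP. Qed.

Lemma period_cost_rdc_only O :
  period_cost f0 f1 c0 c1 O (fun _ => 0%N) <= f0 + \sum_(i < n) c0 i * (O i)%:R.
Proof.
rewrite /period_cost.
have -> : [exists i : 'I_n, (0 < 0)%N] = false by apply/existsP => -[].
rewrite mulr0 addr0 lerD ?ler_piMr //; first by case: ifP.
by under eq_bigr => i _ do rewrite subn0 mulr0 addr0.
Qed.

Lemma period_cost_fdc_only O :
  period_cost f0 f1 c0 c1 O O <= f1 + \sum_(i < n) c1 i * (O i)%:R.
Proof.
rewrite /period_cost; have -> : [exists i, (0 < O i - O i)%N] = false.
  by apply/existsP => -[i]; rewrite subnn.
rewrite mulr0 add0r lerD ?ler_piMr //; first by case: ifP.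
by under eq_bigr => i _ do rewrite subnn mulr0 add0r.
Qed.

End CostUpperBounds.

Lemma plan_ok_nseq n (inv O : 'I_n -> nat) k :
  (forall i, O i * k <= inv i)%N -> plan_ok inv (nseq k O) (nseq k O).
Proof.
elim: k inv => [|k IHk] inv O_le //=; split.
  by move=> i; split => //; apply: leq_trans (O_le i); rewrite mulnS leq_addr.
by apply: IHk => i; have := O_le i; rewrite mulnS; lia.
Qed.

Lemma plan_cost_nseq (R : realType) (f0 f1 : R) n (c0 c1 : 'I_n -> R) O k :
  plan_cost f0 f1 c0 c1 (nseq k O) (nseq k O) = k%:R * period_cost f0 f1 c0 c1 O O.
Proof. by elim: k => [|k IHk] /=; rewrite ?mul0r // IHk -nat1r mulrDl mul1r. Qed.

Section RatioBounds.
Variables (R : realType) (f0 f1 : R) (pol : policy R).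

Definition exceeds_plan_ratio (r : R) : Prop :=
  exists n (I0 : 'I_n -> nat) (c0 c1 : 'I_n -> R) os ms,
    [/\ forall i, 0 <= c0 i, forall i, 0 <= c1 i, plan_ok I0 os ms &
        r * plan_cost f0 f1 c0 c1 os ms < ALG f0 f1 pol I0 c0 c1 os].

Lemma ratio_at_least_of_plans (B : R) : 0 <= f0 -> 0 <= f1 -> 0 < B ->
  (forall r : R, 0 <= r -> r < B -> exceeds_plan_ratio r) ->
  ratio_at_least f0 f1 pol B.
Proof.
move=> f0_ge0 f1_ge0 B_gt0 exceeds r r_lt_B.
have r'_ge0 : 0 <= Num.max r 0 by rewrite le_max lexx orbT.
have [|n [I0 [c0 [c1 [os [ms [c0_ge0 c1_ge0 ms_ok ALG_gt]]]]]]] :=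
  exceeds _ r'_ge0; first by rewrite gt_max r_lt_B.
exists n, I0, c0, c1, os; split=> //; split=> //.
apply: le_lt_trans ALG_gt; apply: le_trans (_ : Num.max r 0 * OPT f0 f1 I0 c0 c1 os <= _).
  by rewrite ler_wpM2r ?OPT_ge0 ?le_max ?lexx.
by rewrite ler_wpM2l ?OPT_le_plan_cost.
Qed.

Lemma ratio_at_least_max (B B' : R) :
  ratio_at_least f0 f1 pol B -> ratio_at_least f0 f1 pol B' ->
  ratio_at_least f0 f1 pol (Num.max B B').
Proof.
by move=> ratioB ratioB' r; rewrite lt_max => /orP[]; [apply: ratioB | apply: ratioB'].
Qed.

End RatioBounds.

Lemma ler_sum_term {R : numDomainType} {n} (F : 'I_n -> R) i :
  (forall j, 0 <= F j) -> F i <= \sum_(j < n) F j.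
Proof. by move=> F_ge0; rewrite (bigD1 i) //= lerDl sumr_ge0. Qed.

Lemma exists_ge_average {R : realDomainType} {N} (F : 'I_N -> R) (A : R) :
  (0 < N)%N -> N%:R * A <= \sum_(j < N) F j -> exists j, A <= F j.
Proof.
move=> N_gt0 avg_ge; apply/not_existsP => F_lt; move: avg_ge; apply/negP.
rewrite -ltNge (_ : N%:R * A = \sum_(j < N) A); last first.
  by rewrite sumr_const card_ord mulr_natl.
apply: ltr_sum; first by apply/hasP; exists (Ordinal N_gt0); rewrite ?mem_index_enum.
by move=> j _; rewrite ltNge; apply/negP/F_lt.
Qed.

(* Item [ord0] is the hub: its RDC price [f1] equals the FDC fixed cost, so a
   period demanding one hub unit costs at least [f1] whatever the decision. *)
Section HubInstance.
Variables (R : realType) (f0 f1 a : R) (N q : nat).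
Hypotheses (f0_ge0 : 0 <= f0) (f1_gt0 : 0 < f1) (a_ge0 : 0 <= a).

Local Notation spoke j := (lift ord0 j).

Definition hub_inv (i : 'I_N.+1) : nat := if i == ord0 then q.+1 else q.
Definition rdc_cost (i : 'I_N.+1) : R := if i == ord0 then f1 else a.
Definition fdc_cost (i : 'I_N.+1) : R := 0.
Definition bulk_order (i : 'I_N.+1) : nat := if i == ord0 then 1 else q.
Definition pair_order (j : 'I_N) (i : 'I_N.+1) : nat :=
  if (i == ord0) || (i == spoke j) then 1 else 0.
Definition spoke_order (j : 'I_N) (i : 'I_N.+1) : nat :=
  if i == spoke j then 1 else 0.

Local Notation cost := (period_cost f0 f1 rdc_cost fdc_cost).

Lemma rdc_cost_ge0 i : 0 <= rdc_cost i.
Proof. by rewrite /rdc_cost; case: ifP => // _; apply: ltW. Qed.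

Lemma fdc_cost_ge0 i : 0 <= fdc_cost i.
Proof. by []. Qed.

Lemma period_cost_hub_ge O m : O ord0 = 1%N -> (m ord0 <= 1)%N ->
  f1 + f0 * (if [exists i, (0 < O i - m i)%N] then 1 else 0)
     + a * \sum_(j < N) (O (spoke j) - m (spoke j))%:R <= cost O m.
Proof.
move=> O0 m0_le1; rewrite /period_cost big_ord_recl /rdc_cost /fdc_cost eqxx O0.
rewrite mulr_sumr; under [in leRHS]eq_bigr => j _ do rewrite /= mul0r addr0.
rewrite mul0r addr0 (addrC f1) -!addrA lerD2l [leRHS]addrA lerD2r.
have [->|m0_gt0] := posnP (m ord0).
  by rewrite mulr1 lerDr mulr_ge0 ?(ltW f1_gt0) //; case: ifP.
have -> : [exists i, (0 < m i)%N] by apply/existsP; exists ord0.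
by rewrite mulr1 lerDl mulr_ge0 ?(ltW f1_gt0).
Qed.

Lemma period_cost_bulk_ge m : (forall i, m i <= bulk_order i)%N ->
  f1 + a * \sum_(j < N) (q - m (spoke j))%:R <= cost bulk_order m.
Proof.
move=> m_le; apply: le_trans (period_cost_hub_ge _ _ _ (m_le ord0)) => //.
by rewrite -addrA lerD2l lerDr mulr_ge0 //; case: ifP.
Qed.

Lemma period_cost_pair_ge j m : (forall i, m i <= pair_order j i)%N ->
  f1 + (f0 + a) * (m (spoke j) == 0%N)%:R <= cost (pair_order j) m.
Proof.
move=> m_le; apply: le_trans (period_cost_hub_ge _ _ _ (m_le ord0)) => //.
have [mj0|_] := eqVneq (m (spoke j)) 0%N; last first.
  by rewrite mulr0 addr0 -addrA lerDl addr_ge0 ?mulr_ge0 ?sumr_ge0 //; case: ifP.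
have -> : [exists i, (0 < pair_order j i - m i)%N].
  by apply/existsP; exists (spoke j); rewrite mj0 /pair_order eqxx orbT.
rewrite !mulr1 addrA lerD2l -[leLHS]mulr1 ler_wpM2l //.
apply: le_trans (ler_sum_term _ j _) => //; first by rewrite mj0 /pair_order eqxx orbT.
Qed.

Lemma period_cost_spoke_ge j m : f0 + a = 2 * f1 ->
  (forall i, m i <= spoke_order j i)%N ->
  2 * f1 - f1 * (m (spoke j))%:R <= cost (spoke_order j) m.
Proof.
move=> f0a m_le; have := m_le (spoke j); rewrite /spoke_order eqxx.
have [mj0 _|mj_gt0 mj_le1] := posnP (m (spoke j)).
  rewrite mj0 mulr0 subr0 -f0a.
  apply: le_trans
    (period_cost_ge_rdc (ltW f1_gt0) rdc_cost_ge0 fdc_cost_ge0 _ _ (spoke j) _).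
    by rewrite /rdc_cost /spoke_order /= eqxx mj0 mulr1.
  by rewrite mj0 /spoke_order eqxx.
have -> : m (spoke j) = 1%N by apply/eqP; rewrite eqn_leq mj_le1.
rewrite mulr1 mulrDl mul1r addrK.
exact: period_cost_ge_fdc f0_ge0 rdc_cost_ge0 fdc_cost_ge0 _ _ (spoke j) mj_gt0.
Qed.

Definition bulk_plan (j : 'I_N) : seq ('I_N.+1 -> nat) :=
  (fun i => if i == spoke j then 0 else bulk_order i) :: nseq q (pair_order j).

Lemma bulk_plan_ok j :
  plan_ok hub_inv (bulk_order :: nseq q (pair_order j)) (bulk_plan j).
Proof.
split.
  by move=> i; rewrite /bulk_order /hub_inv; case: (i == spoke j); case: (i == ord0).
apply: plan_ok_nseq => i; rewrite /pair_order /bulk_order /hub_inv.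
have [->|i_hub] := eqVneq i ord0; first by rewrite /= mul1n subn1.
have [_|i_spoke] := eqVneq i (spoke j); first by rewrite mul1n subn0.
by rewrite mul0n.
Qed.

Lemma bulk_plan_cost j : plan_cost f0 f1 rdc_cost fdc_cost
  (bulk_order :: nseq q (pair_order j)) (bulk_plan j) <= f0 + f1 + a * q%:R + q%:R * f1.
Proof.
rewrite /= plan_cost_nseq lerD //.
  apply: le_trans (period_cost_le f0_ge0 (ltW f1_gt0) _ _) _; rewrite lerD2l.
  rewrite (bigD1 (spoke j)) //= big1 ?addr0 => [|i /negbTE ij].
    by rewrite eqxx /bulk_order /rdc_cost /fdc_cost /= subn0 mul0r addr0.
  by rewrite ij /fdc_cost subnn mulr0 mul0r addr0.
rewrite ler_wpM2l //; apply: le_trans (period_cost_fdc_only (ltW f1_gt0) _) _.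
by rewrite /fdc_cost big1 ?addr0 // => i _; rewrite mul0r.
Qed.

Lemma spoke_plan_ok j :
  (0 < q)%N -> plan_ok hub_inv [:: spoke_order j] [:: spoke_order j].
Proof.
move=> q_gt0; split=> // i; rewrite /spoke_order /hub_inv.
by case: (i == spoke j); case: (i == ord0).
Qed.

Lemma spoke_plan_cost j :
  plan_cost f0 f1 rdc_cost fdc_cost [:: spoke_order j] [:: spoke_order j] <= f1.
Proof.
rewrite /= addr0; apply: le_trans (period_cost_fdc_only (ltW f1_gt0) _) _.
by rewrite /fdc_cost big1 ?addr0 // => i _; rewrite mul0r.
Qed.

Lemma spoke_pair_plan_ok j : (0 < q)%N ->
  plan_ok hub_inv [:: spoke_order j; pair_order j] [:: fun _ => 0%N; pair_order j].
Proof.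
move=> q_gt0; split; first by [].
split=> // i; rewrite /pair_order /hub_inv subn0.
by case: (i == ord0); case: (i == spoke j).
Qed.

Lemma spoke_pair_plan_cost j : plan_cost f0 f1 rdc_cost fdc_cost
  [:: spoke_order j; pair_order j] [:: fun _ => 0%N; pair_order j] <= f0 + a + f1.
Proof.
rewrite /= addr0 lerD //.
  apply: le_trans (period_cost_rdc_only f0_ge0 _) _; rewrite lerD2l.
  rewrite (bigD1 (spoke j)) //= big1 ?addr0 => [|i /negbTE ij].
    by rewrite /spoke_order /rdc_cost eqxx mulr1.
  by rewrite /spoke_order ij mulr0.
apply: le_trans (period_cost_fdc_only (ltW f1_gt0) _) _.
by rewrite /fdc_cost big1 ?addr0 // => i _; rewrite mul0r.
Qed.

Variables (pol : policy R) (pol_valid : valid_policy pol).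

Lemma exp_cost_pairs_ge j k h :
  k%:R * f1 + (f0 + a) * (k - remaining hub_inv h (spoke j))%:R
    <= exp_cost f0 f1 pol hub_inv rdc_cost fdc_cost h (nseq k (pair_order j)).
Proof.
apply: (exp_cost_nseq_ge pol_valid f0 f1 hub_inv rdc_cost fdc_cost (pair_order j)
  (fun inv k => k%:R * f1 + (f0 + a) * (k - inv (spoke j))%:R)).
  by move=> inv; rewrite sub0n mul0r add0r mulr0.
move=> inv {}k m m_ok; have [mj_le mj_inv] := m_ok (spoke j).
apply: le_trans _ (lerD (period_cost_pair_ge _ _ (fun i => (m_ok i).1)) (lexx _)).
have step : ((k.+1 - inv (spoke j))%:R <=
    (m (spoke j) == 0%N)%:R + (k - (inv (spoke j) - m (spoke j)))%:R :> R).
  rewrite -natrD ler_nat; move: mj_le mj_inv; rewrite /pair_order eqxx orbT.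
  by case: (m (spoke j)) => [|[|]] //=; lia.
have := ler_wpM2l (addr_ge0 f0_ge0 a_ge0) step.
rewrite mulrDr -natr1 [(k%:R + 1) * f1]mulrDl mul1r; lra.
Qed.

Local Notation ALG_hub := (ALG f0 f1 pol hub_inv rdc_cost fdc_cost).

Lemma bulk_then_pairs_sum_ge m : f0 + a <= N%:R * a ->
  (forall i, m i <= bulk_order i /\ m i <= hub_inv i)%N ->
  N%:R * (f1 + q%:R * (f1 + f0 + a)) <= \sum_(j < N) (cost bulk_order m +
    exp_cost f0 f1 pol hub_inv rdc_cost fdc_cost [:: (bulk_order, m)] (nseq q (pair_order j))).
Proof.
move=> Na m_ok; have m_le_q (j : 'I_N) : (m (spoke j) <= q)%N by have [] := m_ok (spoke j).
have pairs_ge (j : 'I_N) : q%:R * f1 + (f0 + a) * (m (spoke j))%:R <=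
    exp_cost f0 f1 pol hub_inv rdc_cost fdc_cost [:: (bulk_order, m)] (nseq q (pair_order j)).
  apply: le_trans (exp_cost_pairs_ge j q [:: (bulk_order, m)]).
  by rewrite /remaining big_seq1 /hub_inv /= subKn.
apply: le_trans _ (ler_sum _ (fun j _ => lerD (period_cost_bulk_ge _ (fun i => (m_ok i).1))
                                              (pairs_ge j))).
rewrite big_split /= sumr_const card_ord big_split /= sumr_const card_ord -mulr_sumr.
set U := \sum_(j < N) _; set M := \sum_(j < N) _.
have UM : U + M = N%:R * q%:R.
  rewrite /U /M -big_split /=.
  under eq_bigr => j _ do rewrite -natrD subnK ?m_le_q //.
  by rewrite sumr_const card_ord mulr_natl.
have aU : (f0 + a) * U <= N%:R * a * U by rewrite ler_wpM2r ?sumr_ge0.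
have := congr1 (GRing.mul (f0 + a)) UM.
rewrite -[(f1 + _) *+ N]mulr_natl -[_ * f1 *+ N]mulr_natl; lra.
Qed.

Lemma ALG_bulk_pairs_ge : (0 < N)%N -> f0 + a <= N%:R * a ->
  exists j, f1 + q%:R * (f1 + f0 + a) <= ALG_hub (bulk_order :: nseq q (pair_order j)).
Proof.
move=> N_gt0 Na.
apply: (exists_ge_average (fun j => ALG_hub (bulk_order :: nseq q (pair_order j))) _ N_gt0).
rewrite /ALG /= exchange_big /=.
under eq_bigr => pa _ do rewrite -mulr_sumr.
apply: (expect_ge (policy_distr pol_valid _ _ _ _ _ _)) => pa /(policy_feasible pol_valid).
by rewrite remaining_nil; apply: bulk_then_pairs_sum_ge.
Qed.

Definition spoke_fdc_prob (j : 'I_N) : R :=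
  \sum_(pa <- pol N.+1 hub_inv rdc_cost fdc_cost [::] (spoke_order j))
    pa.1 * (pa.2 (spoke j))%:R.

Lemma ALG_spoke_ge j : f0 + a = 2 * f1 ->
  2 * f1 - f1 * spoke_fdc_prob j <= ALG_hub [:: spoke_order j].
Proof.
move=> f0a; rewrite /ALG /spoke_fdc_prob /= -mulNr.
rewrite -(expect_affine (policy_distr pol_valid _ _ _ _ _ _)).
apply: (expect_le (policy_distr pol_valid _ _ _ _ _ _)).
move=> pa /(policy_feasible pol_valid) m_ok.
by rewrite addr0 mulNr; apply: period_cost_spoke_ge f0a (fun i => (m_ok i).1).
Qed.

Lemma ALG_spoke_pair_ge j : f0 + a = 2 * f1 -> q = 1%N ->
  3 * f1 + f1 * spoke_fdc_prob j <= ALG_hub [:: spoke_order j; pair_order j].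
Proof.
move=> f0a q1; rewrite /ALG /spoke_fdc_prob /=.
rewrite -(expect_affine (policy_distr pol_valid _ _ _ _ _ _)).
apply: (expect_le (policy_distr pol_valid _ _ _ _ _ _)) => pa /(policy_feasible pol_valid).
rewrite remaining_nil => m_ok.
have mj_le1 : (pa.2 (spoke j) <= 1)%N.
  by have := (m_ok (spoke j)).1; rewrite /spoke_order eqxx.
have := exp_cost_pairs_ge j 1 [:: (spoke_order j, pa.2)].
rewrite /remaining big_seq1 /hub_inv /= q1 subKn // f0a mul1r => pair_ge.
have := period_cost_spoke_ge _ _ f0a (fun i => (m_ok i).1); lra.
Qed.

End HubInstance.

Lemma ratio_at_least_fixed_cost_ratio {R : realType} {f0 f1 : R} {pol : policy R} :
  0 <= f0 -> 0 < f1 -> valid_policy pol -> ratio_at_least f0 f1 pol (1 + f0 / f1).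
Proof.
move=> f0_ge0 f1_gt0 pol_valid.
apply: ratio_at_least_of_plans => //; first exact: ltW.
  by rewrite ltr_wpDr ?divr_ge0 ?(ltW f1_gt0).
move=> r r_ge0 r_lt.
pose d := f1 + f0 - r * f1.
have d_gt0 : 0 < d.
  by move: r_lt; rewrite /d -(ltr_pM2r f1_gt0) mulrDl mul1r divfK ?gt_eqF //; lra.
pose a := d / (2 * (r + 1)).
have a_gt0 : 0 < a by rewrite divr_gt0 //; lra.
have ar_le : a * r <= d / 2.
  have : a * (2 * (r + 1)) = d by rewrite divfK //; lra.
  by lra.
have key (Q : R) : 0 <= Q -> 2 * r * (f0 + f1) < Q * d ->
    r * (f0 + f1 + a * Q + Q * f1) < f1 + Q * (f1 + f0 + a).
  move=> Q_ge0 Q_big; have := ler_wpM2l Q_ge0 ar_le.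
  have : 0 <= Q * a by rewrite mulr_ge0 // ltW.
  rewrite /d in Q_big *; lra.
pose q := (Num.truncn (2 * r * (f0 + f1) / d)).+1.
have q_big : 2 * r * (f0 + f1) < q%:R * d by rewrite -ltr_pdivrMr ?truncnS_gt.
pose N := (Num.truncn ((f0 + a) / a)).+1.
have N_big : f0 + a <= N%:R * a by rewrite -ler_pdivrMr ?ltW ?truncnS_gt.
have [j ALG_ge] :=
  ALG_bulk_pairs_ge _ _ _ _ _ q f0_ge0 f1_gt0 (ltW a_gt0) _ pol_valid (ltn0Sn _) N_big.
exists N.+1, (hub_inv N q), (rdc_cost R f1 a N), (fdc_cost R N).
exists (bulk_order N q :: nseq q (pair_order N j)), (bulk_plan N q j); split.
- exact: rdc_cost_ge0 f1_gt0 (ltW a_gt0).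
- exact: fdc_cost_ge0.
- exact: bulk_plan_ok.
apply: le_lt_trans (ler_wpM2l r_ge0 (bulk_plan_cost _ _ _ _ _ _ f0_ge0 f1_gt0 j)) _.
apply: lt_le_trans ALG_ge.
exact: key.
Qed.

Lemma ratio_at_least_five_fourths {R : realType} {f0 f1 : R} {pol : policy R} :
  0 <= f0 -> 0 < f1 -> f0 <= 2 * f1 -> valid_policy pol ->
  ratio_at_least f0 f1 pol (5 / 4).
Proof.
move=> f0_ge0 f1_gt0 f0_le pol_valid.
apply: ratio_at_least_of_plans => //; [exact: ltW | by rewrite divr_gt0 |].
move=> r r_ge0 r_lt.
pose a := 2 * f1 - f0.
have a_ge0 : 0 <= a by rewrite subr_ge0.
have f0a : f0 + a = 2 * f1 by rewrite addrC subrK.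
pose j : 'I_1 := ord0.
have spoke_ge := ALG_spoke_ge _ _ _ _ _ 1 f0_ge0 f1_gt0 a_ge0 _ pol_valid j f0a.
have pair_ge := ALG_spoke_pair_ge _ _ _ _ _ _ f0_ge0 f1_gt0 a_ge0 _ pol_valid j f0a erefl.
move: spoke_ge pair_ge; set P := spoke_fdc_prob _ _ _ _ _ _ _ => spoke_ge pair_ge.
exists 2, (hub_inv 1 1), (rdc_cost R f1 a 1), (fdc_cost R 1).
have [r_small|r_big] := ltP r (2 - P).
  exists [:: spoke_order 1 j], [:: spoke_order 1 j]; split.
  - exact: rdc_cost_ge0 f1_gt0 a_ge0.
  - exact: fdc_cost_ge0.
  - exact: spoke_plan_ok.
  apply: le_lt_trans (ler_wpM2l r_ge0 (spoke_plan_cost _ _ _ _ _ f1_gt0 j)) _.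
  apply: lt_le_trans spoke_ge.
  by move: r_small; rewrite -(ltr_pM2r f1_gt0); lra.
exists [:: spoke_order 1 j; pair_order 1 j], [:: fun _ => 0%N; pair_order 1 j]; split.
- exact: rdc_cost_ge0 f1_gt0 a_ge0.
- exact: fdc_cost_ge0.
- exact: spoke_pair_plan_ok.
apply: le_lt_trans (ler_wpM2l r_ge0 (spoke_pair_plan_cost _ _ _ _ _ f0_ge0 f1_gt0 j)) _.
apply: lt_le_trans pair_ge.
have : r * 3 < 3 + P by lra.
rewrite f0a -(ltr_pM2r f1_gt0); lra.
Qed.

Theorem theorem9 (R : realType) (f0 f1 : R) (hf0 : 0 <= f0) (hf1 : 0 < f1)
    (pol : policy R) (hpol : valid_policy pol) :
  ratio_at_least f0 f1 pol (Num.max (1 + f0 / f1) (5 / 4)).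
Proof.
have fixed_ratio := ratio_at_least_fixed_cost_ratio hf0 hf1 hpol.
have [f0_le|f0_gt] := leP f0 (2 * f1).
  exact: ratio_at_least_max fixed_ratio (ratio_at_least_five_fourths hf0 hf1 f0_le hpol).
have f0f1_gt2 : 2 < f0 / f1 by rewrite ltr_pdivlMr.
by rewrite max_l; [exact: fixed_ratio | lra].
Qed.
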